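(* For an integer $n\geq 0$ and $z\in\mathbb{C}$, let $$\mathcal{T}_n(z) := \sum_{m=0}^n \binom{n}{m} m^m\,(n-m+z)^{n-m}$$ (with $0^0\equiv 1$), and let $\Gamma(a,x)=\int_x^\infty t^{a-1}e^{-t}\,dt$ denote the (upper) incomplete Gamma function, $\mathrm{Re}(a)>0$. Then $$\mathcal{T}_n(z) = e^{z+n}\, \Gamma(n+1,z+n).$$
   Context: Convention: $0^0\equiv1$. For $a=n+1$ with $n$ a nonnegative integer, the integrand $t^{n}e^{-t}$ is entire, so $\Gamma(n+1,x)=\int_x^\infty t^{n}e^{-t}\,dt$ is well defined for complex $x$ by integrating along any path from $x$ to $+\infty$ (e.g. a horizontal ray to the right). *)

From Stdlib Require Import Reals.
From Coquelicot Require Import Coquelicot.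
Open Scope R_scope.

Definition Cexp (z : C) : C :=
  (exp (Re z) * cos (Im z), exp (Re z) * sin (Im z)).

(* Natural-number power on C; pow_n w 0 = 1, so 0^0 = 1. *)
Definition Cpown (w : C) (k : nat) : C := pow_n (K := C_Ring) w k.

Definition calT (n : nat) (z : C) : C :=
  sum_n (G := C_AbelianGroup)
    (fun m => Cmult (RtoC (Binomial.C n m))
               (Cmult (Cpown (RtoC (INR m)) m)
                      (Cpown (Cplus (RtoC (INR (n - m))) z) (n - m)))) n.

Definition gamma_integrand (n : nat) (x : C) (s : R) : C :=
  Cmult (Cpown (Cplus x (RtoC s)) n) (Cexp (Copp (Cplus x (RtoC s)))).

(* Upper incomplete Gamma function Gamma(n+1, x) for complex x:
   integral of t^n e^{-t} along the horizontal ray from x to +oo. *)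
Definition upper_gamma_nat (n : nat) (x : C) : C :=
  RInt_gen (V := C_R_CompleteNormedModule) (gamma_integrand n x)
    (at_point 0) (Rbar_locally p_infty).

(* Put x = z + n.  Along the ray t = x + s the binomial expansion of (x + s)^n,
   together with int_0^oo s^k e^-s ds = k!, gives
   e^x Gamma(n+1, x) = sum_k C(n,k) k! x^(n-k).
   On the other side n - m + z = x - m: expanding (x - m)^(n-m) and regrouping with
   C(n,m) C(n-m,k-m) = C(n,k) C(k,m) turns T_n(z) into
   sum_k C(n,k) x^(n-k) sum_m (-1)^(k-m) C(k,m) m^k,
   and the inner sum, the k-th finite difference of t^k, equals k!. *)

From Stdlib Require Import Reals Lra Lia FunctionalExtensionality.
From Coquelicot Require Import Coquelicot.
From HB Require Import structures.
From mathcomp Require Import all_boot all_order all_algebra Rstruct.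
From mathcomp Require ring zify.
Import GRing.Theory.

Local Open Scope R_scope.

Lemma exp_INR_mul (n : nat) (t : R) : exp (INR n * t) = exp t ^ n.
Proof.
elim: n => [|n IH]; first by rewrite Rmult_0_l exp_0.
by rewrite S_INR Rmult_plus_distr_r Rmult_1_l exp_plus IH /=; ring.
Qed.

Definition gamma_kernel (k : nat) (s : R) : R := s ^ k * exp (- s).

Lemma gamma_kernel_le (m : nat) (s : R) : 0 < s ->
  gamma_kernel (S m) s <= INR (S m) ^ S m.
Proof.
move=> s_gt0; rewrite /gamma_kernel.
set c := INR (S m).
have c_gt0 : 0 < c by apply: lt_0_INR; lia.
set t := s / c.
have t_gt0 : 0 < t by apply: Rdiv_lt_0_compat.
have s_ct : s = c * t by rewrite /t; field; lra.
(* s^(m+1) = c^(m+1) t^(m+1) and t^(m+1) <= e^((m+1) t) = e^s, by t <= e^t. *)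
have t_le : t ^ S m <= exp t ^ S m.
  apply: pow_incr; split; first lra.
  by have := exp_ineq1_le t; lra.
have exp_s : exp s = exp t ^ S m by rewrite s_ct exp_INR_mul.
rewrite exp_Ropp exp_s s_ct Rpow_mult_distr Rmult_assoc -[X in _ <= X]Rmult_1_r.
apply: Rmult_le_compat_l; first by apply: pow_le; lra.
have e_gt0 : 0 < exp t ^ S m by apply: pow_lt; apply: exp_pos.
apply: (Rmult_le_reg_r (exp t ^ S m)) => //.
have -> : t ^ S m * / exp t ^ S m * exp t ^ S m = t ^ S m by field; lra.
by rewrite Rmult_1_l.
Qed.

Lemma is_lim_gamma_kernel (m : nat) : is_lim (gamma_kernel m) p_infty 0.
Proof.
apply: (is_lim_le_le_loc (fun _ => 0) (fun s => INR (S m) ^ S m * / s)).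
- exists 0 => s s_gt0; split.
  + by apply: Rmult_le_pos; [apply: pow_le; lra | apply: Rlt_le; apply: exp_pos].
  + apply: (Rmult_le_reg_r s) => //.
    have -> : INR (S m) ^ S m * / s * s = INR (S m) ^ S m by field; lra.
    have -> : gamma_kernel m s * s = gamma_kernel (S m) s by rewrite /gamma_kernel /=; ring.
    exact: gamma_kernel_le.
- exact: is_lim_const.
- have -> : Rbar.Finite 0 = Rbar_mult (INR (S m) ^ S m) (Rbar_inv p_infty)
    by rewrite /= Rmult_0_r.
  apply: is_lim_scal_l; apply: is_lim_inv; [exact: is_lim_id | discriminate].
Qed.

Lemma is_derive_gamma_kernel (j : nat) (s : R) :
  is_derive (gamma_kernel j) s (INR j * s ^ j.-1 * exp (- s) - gamma_kernel j s).
Proof. by rewrite /gamma_kernel; auto_derive; auto; ring. Qed.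

(* -(s^k + k s^(k-1) + k (k-1) s^(k-2) + ... + k!) e^(-s) *)
Fixpoint gamma_kernel_primitive (k : nat) (s : R) : R :=
  match k with
  | O => - gamma_kernel 0 s
  | S j => - gamma_kernel (S j) s + INR (S j) * gamma_kernel_primitive j s
  end.

Lemma is_derive_gamma_kernel_primitive (k : nat) (s : R) :
  is_derive (gamma_kernel_primitive k) s (gamma_kernel k s).
Proof.
elim: k => [|k IH]; simpl gamma_kernel_primitive.
- by rewrite /gamma_kernel; auto_derive; auto; ring.
- have -> : gamma_kernel (S k) s =
    - (INR (S k) * s ^ k * exp (- s) - gamma_kernel (S k) s)
    + INR (S k) * gamma_kernel k s by rewrite /gamma_kernel; ring.
  apply: is_derive_plus; last exact: is_derive_scal.
  exact: is_derive_opp (is_derive_gamma_kernel (S k) s).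
Qed.

Lemma gamma_kernel_primitive0 (k : nat) : gamma_kernel_primitive k 0 = - INR k`!.
Proof.
elim: k => [|k IH]; simpl gamma_kernel_primitive.
- by rewrite /gamma_kernel Ropp_0 exp_0 /=; ring.
- by rewrite IH factS mult_INR /gamma_kernel /=; ring.
Qed.

Lemma is_lim_gamma_kernel_primitive (k : nat) :
  is_lim (gamma_kernel_primitive k) p_infty 0.
Proof.
elim: k => [|k IH]; simpl gamma_kernel_primitive.
- have := is_lim_opp _ _ _ (is_lim_gamma_kernel 0).
  by rewrite /= Ropp_0.
- have := is_lim_plus' _ _ _ _ _ (is_lim_opp _ _ _ (is_lim_gamma_kernel (S k)))
                                 (is_lim_scal_l _ (INR (S k)) _ _ IH).
  by rewrite /= Ropp_0 Rmult_0_r Rplus_0_r.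
Qed.

Section ImproperIntegral.
Context {V : CompleteNormedModule R_AbsRing}.

Lemma is_RInt_gen_p_infty_derive (f F : R -> V) (a : R) (L : V) :
  (forall s, is_derive F s (f s)) -> (forall s, continuous f s) ->
  filterlim F (Rbar_locally p_infty) (locally L) ->
  is_RInt_gen f (at_point a) (Rbar_locally p_infty) (minus L (F a)).
Proof.
move=> F'f f_cont F_lim.
have at_a : filter_prod (at_point a) (Rbar_locally p_infty) (fun ab => fst ab = a).
  by exists (fun x => x = a) (fun _ => True) => //; apply: filter_true.
apply: (filterlimi_lim_ext_loc (fun ab => minus (F (snd ab)) (F (fst ab)))).
  apply: filter_imp at_a => -[x y] /= _.
  by apply: is_RInt_derive => s _; [apply: F'f | apply: f_cont].
apply: (filterlim_ext_loc (fun ab => minus (F (snd ab)) (F a))).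
  by apply: filter_imp at_a => -[x y] /= ->.
apply: (filterlim_comp _ _ _ (fun ab => F (snd ab)) (fun v => minus v (F a)) _ (locally L)).
  exact: filterlim_comp _ _ _ snd F _ _ _ filterlim_snd F_lim.
apply: (continuous_minus (fun v : V => v) (fun _ => F a) L).
- exact: continuous_id.
- exact: continuous_const.
Qed.

Lemma is_RInt_gen_gamma_kernel (k : nat) (w : V) :
  is_RInt_gen (fun s => scal (gamma_kernel k s) w) (at_point 0) (Rbar_locally p_infty)
    (scal (INR k`!) w).
Proof.
have -> : scal (INR k`!) w = minus (scal 0 w) (scal (gamma_kernel_primitive k 0) w).
  rewrite gamma_kernel_primitive0 scal_zero_l /minus plus_zero_l.
  by rewrite (scal_opp_l (INR k`!) w) opp_opp.
apply: (is_RInt_gen_p_infty_derive _ (fun s => scal (gamma_kernel_primitive k s) w)).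
- by move=> s; apply: is_derive_scal_l; apply: is_derive_gamma_kernel_primitive.
- move=> s; apply: continuous_scal_l.
  by apply: ex_derive_continuous; rewrite /gamma_kernel; auto_derive.
- apply: (filterlim_comp _ _ _ (gamma_kernel_primitive k) (fun r => scal r w) _ (locally 0)).
    exact: is_lim_gamma_kernel_primitive.
  exact: filterlim_scal_l.
Qed.

End ImproperIntegral.

Section BinomialSums.
Import ring zify.
Local Open Scope ring_scope.

Lemma mul_bin_sub (n k m : nat) : (m <= k)%N -> (k <= n)%N ->
  ('C(n, m) * 'C(n - m, k - m) = 'C(n, k) * 'C(k, m))%N.
Proof.
move=> le_mk le_kn.
have facts_gt0 : (0 < m`! * ((k - m)`! * (n - k)`!))%N by rewrite !muln_gt0 !fact_gt0.
apply/eqP; rewrite -(eqn_pmul2r facts_gt0); apply/eqP.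
have nmkm : (n - m - (k - m) = n - k)%N by lia.
transitivity ('C(n, m) * (m`! * ('C(n - m, k - m) * ((k - m)`! * (n - m - (k - m))`!))))%N.
  by rewrite nmkm; ring.
rewrite bin_fact; last lia.
rewrite bin_fact; last lia.
rewrite -(bin_fact le_kn) -(bin_fact le_mk); ring.
Qed.

Variable R : comNzRingType.

(* The k-th forward difference of t |-> t^j at t = 0. *)
Definition fdiff_pow (k j : nat) : R :=
  \sum_(m < k.+1) 'C(k, m)%:R * (-1) ^+ (k - m) * m%:R ^+ j.

Lemma fdiff_pow0 (k : nat) : fdiff_pow k 0 = (k == 0)%:R.
Proof.
rewrite /fdiff_pow.
have := exprDn (-1 : R) 1 k; rewrite addNr expr0n => ->.
by apply: eq_bigr => m _; rewrite expr0 mulr1 expr1n mulr1 mulr_natl.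
Qed.

Lemma fdiff_powSS (k j : nat) :
  fdiff_pow k.+1 j.+1 = k.+1%:R * \sum_(l < j.+1) 'C(j, l)%:R * fdiff_pow k l.
Proof.
rewrite /fdiff_pow big_ord_recl expr0n mulr0 add0r.
rewrite (eq_bigr (fun m : 'I_k.+1 => k.+1%:R *
    ('C(k, m)%:R * (-1) ^+ (k - m) * \sum_(l < j.+1) 'C(j, l)%:R * m%:R ^+ l))); last first.
  move=> m _; rewrite lift0 subSS exprS.
  have -> : (m.+1%:R : R) ^+ j = \sum_(l < j.+1) 'C(j, l)%:R * m%:R ^+ l.
    by rewrite -addn1 natrD exprD1n; apply: eq_bigr => l _; rewrite mulr_natl.
  have absorb : ('C(k.+1, m.+1)%:R * m.+1%:R : R) = k.+1%:R * 'C(k, m)%:R.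
    by rewrite -!natrM mulnC -mul_bin_diag.
  set s := \sum_(_ < _) _.
  transitivity ('C(k.+1, m.+1)%:R * m.+1%:R * ((-1) ^+ (k - m) * s)); first by ring.
  by rewrite absorb; ring.
rewrite -mulr_sumr; congr (_ * _).
under eq_bigr do rewrite mulr_sumr.
rewrite exchange_big /=; apply: eq_bigr => l _.
rewrite mulr_sumr; apply: eq_bigr => m _; ring.
Qed.

Lemma fdiff_pow_le (j k : nat) : (j <= k)%N ->
  fdiff_pow k j = if j == k then k`!%:R else 0.
Proof.
elim/ltn_ind: j k => -[_ k _ | j IH [//| k] le_jk]; first by rewrite fdiff_pow0; case: k.
rewrite fdiff_powSS eqSS big_ord_recr /= big1 => [|l _]; last first.
  have lt_lj := ltn_ord l.
  have lt_lk : (l < k)%N by apply: leq_trans lt_lj le_jk.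
  by rewrite IH ?(ltn_eqF lt_lk) ?mulr0 //; lia.
rewrite add0r IH // binn mul1r.
by case: (j == k); rewrite ?mulr0 // factS natrM.
Qed.

Lemma fdiff_pow_diag (k : nat) : fdiff_pow k k = k`!%:R.
Proof. by rewrite fdiff_pow_le ?eqxx. Qed.

Lemma big_ord_shift_geq (F : nat -> R) (n m : nat) : (m <= n)%N ->
  \sum_(i < (n - m).+1) F i = \sum_(k < n.+1 | (m <= k)%N) F (k - m)%N.
Proof.
move=> le_mn.
rewrite -(big_geq_mkord m n.+1 xpredT (fun k => F (k - m)%N)).
rewrite (big_addn 0 n.+1 m) -(big_mkord xpredT) subSn //.
by apply: eq_bigr => i _; rewrite addnK.
Qed.

Lemma sum_bin_pow_self (x : R) (n : nat) :
  \sum_(m < n.+1) 'C(n, m)%:R * (m%:R ^+ m * (x - m%:R) ^+ (n - m)) =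
  \sum_(k < n.+1) ('C(n, k) * k`!)%:R * x ^+ (n - k).
Proof.
pose G k m : R := 'C(n, k)%:R * x ^+ (n - k) * ('C(k, m)%:R * (-1) ^+ (k - m) * m%:R ^+ k).
transitivity (\sum_(m < n.+1) \sum_(k < n.+1 | (m <= k)%N) G k m).
  apply: eq_bigr => m _; have le_mn : (m <= n)%N by rewrite -ltnS.
  rewrite exprDn mulr_sumr mulr_sumr (big_ord_shift_geq (fun i =>
    'C(n, m)%:R * (m%:R ^+ m * (x ^+ (n - m - i) * (- m%:R) ^+ i *+ 'C(n - m, i)))) _ _ le_mn).
  apply: eq_bigr => k le_mk; rewrite /G; have le_kn : (k <= n)%N by rewrite -ltnS.
  have -> : (n - m - (k - m) = n - k)%N by lia.
  have -> : (m%:R ^+ k : R) = m%:R ^+ m * m%:R ^+ (k - m) by rewrite -exprD subnKC.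
  have bin_nk : ('C(n, m)%:R * 'C(n - m, k - m)%:R : R) = 'C(n, k)%:R * 'C(k, m)%:R.
    by rewrite -!natrM mul_bin_sub.
  rewrite -mulN1r exprMn -mulr_natr.
  transitivity ('C(n, m)%:R * 'C(n - m, k - m)%:R * x ^+ (n - k) * (-1) ^+ (k - m)
                  * (m%:R ^+ m * m%:R ^+ (k - m))); first by ring.
  by rewrite bin_nk; ring.
rewrite (exchange_big_dep xpredT) //=; apply: eq_bigr => k _.
rewrite natrM -fdiff_pow_diag /fdiff_pow.
rewrite (big_ord_widen n.+1 (fun m => 'C(k, m)%:R * (-1) ^+ (k - m) * m%:R ^+ k)) //.
rewrite mulr_sumr mulr_suml; apply: eq_big => [m | m _]; first by rewrite ltnS.
by rewrite /G; ring.
Qed.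

End BinomialSums.

Lemma Cexp_opp_add_RtoC (x : C) (s : R) :
  Cexp (Copp (Cplus x (RtoC s))) = Cmult (RtoC (exp (- s))) (Cexp (Copp x)).
Proof.
case: x => a b; rewrite /Cexp /= Rplus_0_r Ropp_plus_distr exp_plus.
by apply: injective_projections => /=; ring.
Qed.

Lemma Cexp_mul_opp (x : C) : Cmult (Cexp x) (Cexp (Copp x)) = RtoC 1.
Proof.
case: x => a b; rewrite /Cexp /= cos_neg sin_neg.
have exp_aa : exp a * exp (- a) = 1 by rewrite -exp_plus Rplus_opp_r exp_0.
have sin2_cos2_b := sin2_cos2 b; rewrite /Rsqr in sin2_cos2_b.
apply: injective_projections => /=; last by ring.
transitivity (exp a * exp (- a) * (sin b * sin b + cos b * cos b)); first by ring.
by rewrite exp_aa sin2_cos2_b; ring.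
Qed.

(* C = R * R already carries MathComp's componentwise ring structure; the alias
   carries the complex one. *)
Definition Cring : Type := C.
HB.instance Definition _ := Choice.on Cring.
HB.instance Definition _ := GRing.isZmodule.Build Cring
  Cplus_assoc Cplus_comm Cplus_0_l (fun x => etrans (Cplus_comm _ x) (Cplus_opp_r x)).
Lemma Cring_one_neq0 : (RtoC 1 : Cring) != RtoC 0.
Proof. by apply/eqP => -[]; lra. Qed.
HB.instance Definition _ := GRing.Zmodule_isComNzRing.Build Cring
  Cmult_assoc Cmult_comm Cmult_1_l Cmult_plus_distr_r Cring_one_neq0.

Section ComplexRing.
Local Open Scope ring_scope.

Lemma CplusE (a b : Cring) : Cplus a b = a + b. Proof. by []. Qed.
Lemma CmultE (a b : Cring) : Cmult a b = a * b. Proof. by []. Qed.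

Lemma RtoC_INR (n : nat) : RtoC (INR n) = n%:R :> Cring.
Proof.
elim: n => [|n IH] //.
rewrite S_INR -addn1 natrD -IH.
by apply: injective_projections => /=; ring.
Qed.

Lemma RtoC_exprn (s : R) (k : nat) : RtoC (pow s k) = (RtoC s : Cring) ^+ k.
Proof. by elim: k => [|k IH] //; rewrite exprS -IH /= RtoC_mult. Qed.

Lemma Cpown_exprn (w : Cring) (k : nat) : Cpown w k = w ^+ k.
Proof. by elim: k => [|k IH] //; rewrite exprS -IH. Qed.

Lemma sum_n_big (f : nat -> Cring) (n : nat) : sum_n f n = \sum_(i < n.+1) f i.
Proof.
elim: n => [|n IH]; first by rewrite sum_O big_ord1.
by rewrite sum_Sn IH [in RHS]big_ord_recr.
Qed.

Lemma Factorial_factE (k : nat) : Factorial.fact k = k`!.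
Proof. by elim: k => [|k IH] //; rewrite factS -IH. Qed.

Lemma Binomial_CE (n m : nat) : (m <= n)%N -> Binomial.C n m = INR 'C(n, m).
Proof.
move=> le_mn.
rewrite /Binomial.C !Factorial_factE -(bin_fact le_mn) !mult_INR.
have fact_neq0 k : INR k`! <> 0%R by apply: not_0_INR; have := fact_gt0 k; lia.
change (n - m)%coq_nat with (n - m)%N.
by field; split; apply: fact_neq0.
Qed.

Lemma scal_RtoC (r : R) (w : C) : scal r w = Cmult (RtoC r) w.
Proof.
case: w => a b; rewrite /Cmult /RtoC /=.
by apply: injective_projections; rewrite /scal /= /scal /= /mult /=; ring.
Qed.

End ComplexRing.

Section GammaIntegral.
Import ring.

Lemma is_RInt_gen_sum {Fa Fb : (R -> Prop) -> Prop} {FFa : Filter Fa} {FFb : Filter Fb}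
    (n : nat) (f : nat -> R -> Cring) (I : nat -> Cring) :
  (forall k, is_RInt_gen (V := C_R_NormedModule) (f k) Fa Fb (I k)) ->
  is_RInt_gen (V := C_R_NormedModule) (fun s => \sum_(k < n.+1) f k s)%R Fa Fb
    (\sum_(k < n.+1) I k)%R.
Proof.
move=> fI; elim: n => [|n IH].
  have -> : (fun s => \sum_(k < 1) f k s)%R = f 0%N.
    by apply: functional_extensionality => s; rewrite big_ord1.
  by rewrite big_ord1.
have -> : (fun s => \sum_(k < n.+2) f k s)%R =
          (fun s => plus (G := C_AbelianGroup) (\sum_(k < n.+1) f k s)%R (f n.+1 s)).
  by apply: functional_extensionality => s; rewrite big_ord_recr.
by rewrite big_ord_recr; apply: is_RInt_gen_plus.
Qed.

Lemma gamma_integrand_expand (n : nat) (x : Cring) (s : R) :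
  gamma_integrand n x s =
  (\sum_(k < n.+1) scal (gamma_kernel k s) (x ^+ (n - k) *+ 'C(n, k) * Cexp (Copp x)))%R
  :> Cring.
Proof.
rewrite /gamma_integrand Cpown_exprn Cexp_opp_add_RtoC CmultE CmultE CplusE.
rewrite exprDn mulr_suml; apply: eq_bigr => k _.
by rewrite scal_RtoC /gamma_kernel RtoC_mult RtoC_exprn !CmultE; ring.
Qed.

Lemma is_RInt_gen_gamma_integrand (n : nat) (x : Cring) :
  is_RInt_gen (V := C_R_NormedModule) (gamma_integrand n x)
    (at_point 0) (Rbar_locally p_infty)
    (\sum_(k < n.+1) ('C(n, k) * k`!)%:R * x ^+ (n - k) * Cexp (Copp x))%R.
Proof.
pose w k : Cring := (x ^+ (n - k) *+ 'C(n, k) * Cexp (Copp x))%R.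
have -> : gamma_integrand n x = fun s => (\sum_(k < n.+1) scal (gamma_kernel k s) (w k))%R.
  by apply: functional_extensionality => s; apply: gamma_integrand_expand.
have -> : (\sum_(k < n.+1) ('C(n, k) * k`!)%:R * x ^+ (n - k) * Cexp (Copp x))%R =
          (\sum_(k < n.+1) scal (INR k`!) (w k))%R.
  by apply: eq_bigr => k _; rewrite scal_RtoC RtoC_INR CmultE natrM /w; ring.
apply: (is_RInt_gen_sum n (fun k s => scal (gamma_kernel k s) (w k))
                         (fun k => scal (INR k`!) (w k))) => k.
exact: (is_RInt_gen_gamma_kernel (V := C_R_CompleteNormedModule)).
Qed.

Lemma upper_gamma_natE (n : nat) (x : Cring) :
  upper_gamma_nat n x =
  (\sum_(k < n.+1) ('C(n, k) * k`!)%:R * x ^+ (n - k) * Cexp (Copp x))%R.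
Proof.
exact: (is_RInt_gen_unique (V := C_R_CompleteNormedModule)
  (FFa := Proper_StrongProper _ (at_point_filter 0))
  (FFb := Proper_StrongProper _ (Rbar_locally_filter p_infty))
  _ _ (is_RInt_gen_gamma_integrand n x)).
Qed.

End GammaIntegral.

Lemma calTE (n : nat) (z : C) :
  calT n z =
  (\sum_(k < n.+1) ('C(n, k) * k`!)%:R * (Cplus z (RtoC (INR n)) : Cring) ^+ (n - k))%R.
Proof.
rewrite /calT sum_n_big -sum_bin_pow_self; apply: eq_bigr => m _.
have le_mn : (m <= n)%N by rewrite -ltnS.
change (n - m)%coq_nat with (n - m)%N.
have -> : Cplus (RtoC (INR (n - m))) z =
          ((Cplus z (RtoC (INR n)) : Cring) - m%:R)%R :> Cring.
  by rewrite CplusE CplusE !RtoC_INR natrB // addrC addrA.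
by rewrite Binomial_CE // !Cpown_exprn !RtoC_INR !CmultE.
Qed.

Theorem proposition5 (n : nat) (z : C) :
  ex_RInt_gen (V := C_R_NormedModule) (gamma_integrand n (Cplus z (RtoC (INR n))))
    (at_point 0) (Rbar_locally p_infty) /\
  calT n z = Cmult (Cexp (Cplus z (RtoC (INR n))))
                   (upper_gamma_nat n (Cplus z (RtoC (INR n)))).
Proof.
split; first by eexists; apply: is_RInt_gen_gamma_integrand.
rewrite calTE upper_gamma_natE CmultE mulr_sumr; apply: eq_bigr => k _.
by rewrite mulrCA -[((Cexp _ : Cring) * _)%R]CmultE Cexp_mul_opp mulr1.
Qed.
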